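(* Let $\mathbb{K}$ be a field and let $M\in M_n(\mathbb{K})$ be $\mathbb{K}$-regular. Then there exists a unique complete additive Jordan–Chevalley decomposition over $\mathbb{K}$ of $M$, $M = H(M)+V(M)+N(M)$. Moreover $H(M)$, $V(M)$, $N(M)$ are polynomial expressions of $M$ with coefficients in $\mathbb{K}$, and $H(M)+V(M)$ and $N(M)$ coincide respectively with the semisimple and the nilpotent components of the additive Jordan–Chevalley decomposition of $M$.
   Context: An element of $\overline{\mathbb{K}}$ (fixed algebraic closure) is $\mathbb{K}$-regular if its degree over $\mathbb{K}$ is not a multiple of $char(\mathbb{K})$; $\mathcal{R}_\mathbb{K}$ is the set of such elements. For $\lambda\in\mathcal{R}_\mathbb{K}$ with monic minimal polynomial $X^d+a_{d-1}X^{d-1}+\cdots+a_0$, $H_\mathbb{K}(\lambda)=-a_{d-1}/d$ and $Ker(H_\mathbb{K})=\{\lambda\in\mathcal{R}_\mathbb{K}:H_\mathbb{K}(\lambda)=0\}$. A matrix in $M_n(\mathbb{K})$ is $\mathbb{K}$-regular if all its eigenvalues lie in $\mathcal{R}_\mathbb{K}$; a $\mathbb{K}$-regular matrix is $\mathbb{K}$-vertical if all its eigenvalues lie in $Ker(H_\mathbb{K})$. A complete additive Jordan–Chevalley decomposition over $\mathbb{K}$ of $M\in M_n(\mathbb{K})$ is a decomposition $M=H+V+N$ with $H,V,N\in M_n(\mathbb{K})$ mutually commuting, $H$ diagonalizable over $\mathbb{K}$, $V$ $\mathbb{K}$-vertical and semisimple (diagonalizable over $\overline{\mathbb{K}}$),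 and $N$ nilpotent. The additive Jordan–Chevalley decomposition is the unique decomposition $M=S+N$ with $S$ semisimple, $N$ nilpotent, $SN=NS$. *)

From HB Require Import structures.
From mathcomp Require Import all_boot all_order all_algebra.
Set Implicit Arguments. Unset Strict Implicit. Unset Printing Implicit Defensive.
Import Order.TTheory GRing.Theory Num.Theory.
Local Open Scope ring_scope.

(* Setting: a field K, an algebraically closed field L together with an
   embedding iota : K -> L making L algebraic over K (a fixed algebraic
   closure of K). *)

Section Defs.
Variables (K : fieldType) (L : closedFieldType) (iota : {rmorphism K -> L}).

Definition algebraic_over : Prop :=
  forall x : L, exists2 p : {poly K}, p != 0 & root (map_poly iota p) x.

Definition is_minpoly (p : {poly K}) (lam : L) : Prop :=
  [/\ p \is monic, root (map_poly iota p) lam &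
      forall q : {poly K}, q != 0 -> root (map_poly iota q) lam ->
        (size p <= size q)%N].

(* degree d not a multiple of char K (vacuous in characteristic 0) *)
Definition deg_not_mult_char (d : nat) : Prop :=
  forall p : nat, p \in [pchar K] -> ~~ (p %| d)%N.

Definition K_regular_elt (lam : L) : Prop :=
  exists2 p : {poly K}, is_minpoly p lam & deg_not_mult_char (size p).-1.

(* lam in Ker(H_K): K-regular with H_K(lam) = - a_{d-1} / d = 0 *)
Definition in_ker_H (lam : L) : Prop :=
  exists p : {poly K},
    [/\ is_minpoly p lam, deg_not_mult_char (size p).-1 &
        - p`_((size p).-1.-1) / ((size p).-1)%:R = 0].

Variable n : nat.

Definition K_regular_mx (M : 'M[K]_n) : Prop :=
  forall lam : L, eigenvalue (map_mx iota M) lam -> K_regular_elt lam.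

Definition K_vertical_mx (M : 'M[K]_n) : Prop :=
  K_regular_mx M /\
  forall lam : L, eigenvalue (map_mx iota M) lam -> in_ker_H lam.

(* semisimple: diagonalizable over the algebraic closure *)
Definition semisimple_mx (M : 'M[K]_n) : Prop :=
  diagonalizable (map_mx iota M).

Definition nilpotent_mx (M : 'M[K]_n) : Prop :=
  exists k : nat, M ^+ k = 0.

Definition complete_JC (M H V N : 'M[K]_n) : Prop :=
  [/\ M = H + V + N,
      [/\ comm_mx H V, comm_mx H N & comm_mx V N],
      diagonalizable H,
      K_vertical_mx V /\ semisimple_mx V &
      nilpotent_mx N].

Definition additive_JC (M S N : 'M[K]_n) : Prop :=
  [/\ M = S + N, semisimple_mx S, nilpotent_mx N & comm_mx S N].

Definition poly_mx (p : {poly K}) (M : 'M[K]_n) : 'M[K]_n :=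
  \sum_(i < size p) p`_i *: M ^+ i.

Definition is_poly_in (M A : 'M[K]_n) : Prop :=
  exists p : {poly K}, A = poly_mx p M.

End Defs.

(* Let [P] be the product of the distinct minimal polynomials over [K] of the
   eigenvalues of [M]. Each factor is separable (the leading coefficient of its
   derivative is its degree, nonzero in [K]) and distinct factors are
   coprime, so [P] is separable and [char_poly M] divides a power of [P].
   Newton's iteration yields [s = X mod P] with [P(s(M)) = 0]: [S = s(M)] is
   semisimple and [N = M - S] nilpotent. By the Chinese remainder theorem take
   [h = H_K(f) mod f] for every factor [f]; then [H = h(S)] is diagonalizable
   over [K] and [V = S - H] moves each eigenvalue [z] of [S] to [z - H_K(z)],
   whose minimal polynomial has vanishing subleading coefficient. Uniqueness
   holds because a nilpotent difference of commuting semisimple matrices is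
   zero, and on a common eigenbasis of [H'] and [V'] the eigenvalue of [H'] is
   forced to be [H_K] of the eigenvalue of [S]. *)

From HB Require Import structures.
From mathcomp Require Import all_boot all_order all_algebra.
From mathcomp Require Import separable.
From mathcomp Require Import zify ring.
Import Order.TTheory GRing.Theory Num.Theory.
Local Open Scope ring_scope.
Set Implicit Arguments. Unset Strict Implicit. Unset Printing Implicit Defensive.

Lemma coef_comp_XaddC (R : comNzRingType) (p : {poly R}) c j : (size p <= j.+2)%N ->
  (p \Po ('X + c%:P))`_j = p`_j + p`_j.+1 * c *+ j.+1.
Proof.
elim/poly_ind: p j => [|p a IHp] j le_pj; first by rewrite comp_poly0 !coef0 mul0r mul0rn addr0.
have le_p : (size p <= j.+1)%N.
  by move: le_pj; rewrite size_MXaddC; case: eqP => [->|_]; rewrite ?size_poly0.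
rewrite comp_poly_MXaddC mulrDr !coefD coefMX coefMC !coefC !coefMX.
case: j le_pj le_p => [|i] _ le_p /=.
  by rewrite IHp ?(leq_trans le_p) // (nth_default _ le_p) mul0r mul0rn !addr0 !add0r mulr1n addrC.
rewrite IHp ?(leq_trans le_p) // [in X in _ + X * c]IHp ?(leq_trans le_p) // (nth_default _ le_p).
by rewrite mul0r mul0rn !addr0 -addrA -mulrSr.
Qed.

Lemma comp_poly_taylor1 (R : comNzRingType) (p s c : {poly R}) :
  exists q, p \Po (s + c) = p \Po s + (p^`() \Po s) * c + c ^+ 2 * q.
Proof.
elim/poly_ind: p => [|p a [q IHq]]; first by exists 0; rewrite deriv0 !comp_poly0; ring.
exists (p^`() \Po s + q * (s + c)).
by rewrite derivMXaddC !comp_poly_MXaddC comp_polyD comp_polyM comp_polyX IHq; ring.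
Qed.

Lemma dvdp_comp_sub (R : idomainType) (p a b : {poly R}) : a - b %| (p \Po a) - (p \Po b).
Proof.
elim/poly_ind: p => [|p c IHp]; first by rewrite !comp_poly0 subrr dvdp0.
have -> : ((p * 'X + c%:P) \Po a) - ((p * 'X + c%:P) \Po b) =
          ((p \Po a) - (p \Po b)) * a + (p \Po b) * (a - b).
  by rewrite !comp_poly_MXaddC; ring.
by apply: dvdp_add; [exact: dvdp_mulr | exact: dvdp_mull (dvdpp _)].
Qed.

Section PolyField.
Variable R : fieldType.
Implicit Types p q f g h s : {poly R}.

Lemma coprimep_prodr f (gs : seq {poly R}) :
  (forall g, g \in gs -> coprimep f g) -> coprimep f (\prod_(g <- gs) g).
Proof.
elim: gs => [|g gs IHgs] cop_f; first by rewrite big_nil coprimep1.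
rewrite big_cons coprimepMr cop_f ?mem_head ?IHgs // => g' g'_gs.
by rewrite cop_f // inE g'_gs orbT.
Qed.

Section PairwiseCoprime.
Variable fs : seq {poly R}.
Hypothesis fs_coprime : pairwise (@coprimep R) fs.

Lemma separable_prod_coprime :
  {in fs, forall f, separable_poly f} -> separable_poly (\prod_(f <- fs) f).
Proof.
elim: fs fs_coprime => [|f gs IHgs] /=; first by rewrite big_nil unlock /separable_poly coprime1p.
move=> /andP[/allP cop_f cop_gs] sep; rewrite big_cons separable_mul coprimep_prodr //.
by rewrite sep ?mem_head // IHgs // => g g_gs; rewrite sep // inE g_gs orbT.
Qed.

Lemma dvdp_prod_coprime q :
  {in fs, forall f, f %| q} -> \prod_(f <- fs) f %| q.
Proof.
elim: fs fs_coprime => [|f gs IHgs] /=; first by rewrite big_nil dvd1p.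
move=> /andP[/allP cop_f cop_gs] dvd_q; rewrite big_cons Gauss_dvdp ?coprimep_prodr //.
by rewrite dvd_q ?mem_head // IHgs // => g g_gs; rewrite dvd_q // inE g_gs orbT.
Qed.

Lemma poly_chinese (r : {poly R} -> {poly R}) :
  exists h, forall f, f \in fs -> f %| h - r f.
Proof.
elim: fs fs_coprime => [|f gs IHgs] /=; first by exists 0.
move=> /andP[/allP cop_f /IHgs[h' h'_r]].
set Q := \prod_(g <- gs) g.
have [[u v] /= uv1] := Bezout_eq1_coprimepP _ _ (coprimep_prodr cop_f).
exists (h' + v * Q * (r f - h')) => g; rewrite inE => /predU1P[->|g_gs].
  have -> : v * Q = 1 - u * f by rewrite -uv1 addrC addKr.
  by apply/dvdpP; exists ((h' - r f) * u); ring.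
have /dvdpP[q1 Q_eq] : g %| Q by rewrite /Q (big_rem g) //= dvdp_mulIl.
have /dvdpP[q2 h'_eq] := h'_r g g_gs.
by apply/dvdpP; exists (q2 + v * q1 * (r f - h')); rewrite mulrDl -h'_eq Q_eq; ring.
Qed.
End PairwiseCoprime.

(* Newton's iteration [s := s - P(s) v] in [R[X]], where [u P + v P' = 1]. *)
Lemma hensel_lift (P : {poly R}) k : separable_poly P ->
  exists s, P %| s - 'X /\ P ^+ k.+1 %| P \Po s.
Proof.
rewrite unlock => /Bezout_eq1_coprimepP[[u v] /= uv1].
elim: k => [|k [s [/dvdpP[b s_eq] /dvdpP[a Ps_eq]]]].
  by exists 'X; rewrite subrr dvdp0 expr1 comp_polyXr dvdpp.
set c := - (P \Po s) * v.
exists (s + c); split.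
  by apply/dvdpP; exists (b - a * P ^+ k * v); rewrite addrAC s_eq /c Ps_eq exprS; ring.
have [q P_taylor] := comp_poly_taylor1 P s c.
have [r P'_eq] := dvdpP _ _ (dvdp_comp_sub P^`() s 'X).
have P's : P^`() \Po s = P^`() + r * (b * P).
  by rewrite -s_eq -P'_eq comp_polyXr addrC subrK.
apply/dvdpP; exists (u * a - r * b * a * v + P ^+ k * a ^+ 2 * v ^+ 2 * q).
apply/eqP; rewrite -subr_eq0; apply/eqP.
transitivity ((1 - (u * P + v * P^`())) * (P ^+ k.+1 * a)); last by rewrite uv1 subrr mul0r.
by rewrite P_taylor P's /c Ps_eq !exprS; ring.
Qed.

End PolyField.

Section MinimalPolynomial.
Variables (K : fieldType) (L : closedFieldType) (iota : {rmorphism K -> L}).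
Local Notation "p ^iota" := (map_poly iota p) (at level 2, format "p ^iota").
Implicit Types (f g q : {poly K}) (x y : L).

Lemma is_minpoly_monic f x : is_minpoly iota f x -> f \is monic.
Proof. by case. Qed.

Lemma is_minpoly_root f x : is_minpoly iota f x -> root f^iota x.
Proof. by case. Qed.

Lemma is_minpoly_size_gt1 f x : is_minpoly iota f x -> (1 < size f)%N.
Proof.
move=> [/monic_neq0 f_neq0 fx _]; have := root_size_gt1 _ fx.
by rewrite size_map_poly map_poly_eq0; apply.
Qed.

Lemma is_minpoly_dvdp f q x : is_minpoly iota f x -> root q^iota x -> f %| q.
Proof.
move=> [f_monic fx f_min] qx; apply/modp_eq0P/eqP/contraT => r_neq0.
have : root (q %% f)^iota x.
  by move: qx; rewrite {1}(divp_eq q f) rmorphD rmorphM rootE !hornerE (eqP fx) mulr0 add0r.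
by move=> /(f_min _ r_neq0); rewrite leqNgt ltn_modp monic_neq0.
Qed.

Lemma is_minpoly_uniq f g x : is_minpoly iota f x -> is_minpoly iota g x -> f = g.
Proof.
move=> fx gx; apply/eqP; rewrite -eqp_monic ?(is_minpoly_monic fx) ?(is_minpoly_monic gx) //.
by rewrite /eqp (is_minpoly_dvdp fx (is_minpoly_root gx)) (is_minpoly_dvdp gx (is_minpoly_root fx)).
Qed.

(* Write [f = t * gcdp f q]: minimality at [x] forbids [t(x) = 0], so the gcd
   vanishes at [x] and cannot be smaller than [f]. *)
Lemma is_minpoly_trans f x y : is_minpoly iota f x -> root f^iota y -> is_minpoly iota f y.
Proof.
move=> [f_monic fx f_min] fy; split=> // q q_neq0 qy.
set r := gcdp f q.
have ry : root r^iota y by rewrite gcdp_map root_gcd fy.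
have r_neq0 : r != 0 by rewrite gcdp_eq0 negb_and q_neq0 orbT.
have r_gt1 : (1 < size r)%N.
  by have := root_size_gt1 _ ry; rewrite size_map_poly map_poly_eq0; apply.
have [t f_eq] : exists t, f = t * r := dvdpP _ _ (dvdp_gcdl f q).
have t_neq0 : t != 0 by apply: contra_neq (monic_neq0 f_monic) => t0; rewrite f_eq t0 mul0r.
have : root t^iota x || root r^iota x by rewrite -rootM -rmorphM -f_eq.
case/orP => [/(f_min _ t_neq0)|/(f_min _ r_neq0) le_fr].
  by rewrite f_eq size_mul //; move: r_gt1; move: (size t) (size r) => a b; lia.
exact: leq_trans le_fr (dvdp_leq q_neq0 (dvdp_gcdr f q)).
Qed.

Lemma is_minpoly_shift f x c :
  is_minpoly iota f x -> is_minpoly iota (f \Po ('X + c%:P)) (x - iota c).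
Proof.
move=> [f_monic fx f_min].
have size_shift q d : size (q \Po ('X + d%:P)) = size q.
  by rewrite size_comp_poly2 ?size_XaddC.
split.
- apply/monicP; rewrite lead_coef_comp ?size_XaddC //.
  by rewrite lead_coefXaddC expr1n mulr1 (monicP f_monic).
- by rewrite rootE map_comp_poly horner_comp map_polyXaddC !hornerE subrK.
- move=> q q_neq0 qy; rewrite size_shift -(size_shift q (- c)).
  apply: f_min; first by rewrite -size_poly_eq0 size_shift size_poly_eq0.
  by rewrite rootE map_comp_poly horner_comp map_polyXaddC rmorphN !hornerE.
Qed.

Lemma deg_not_mult_char_neq0 d : deg_not_mult_char K d -> (0 < d)%N -> d%:R != 0 :> K.
Proof.
move=> not_char d_gt0; apply/negP => /eqP d0.
have [p p_char] := natf0_pchar d_gt0 (introT eqP d0).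
by have := not_char p p_char; rewrite (dvdn_pcharf p_char) d0 eqxx.
Qed.

(* The paper's [H_K(x)], read off the minimal polynomial [f] of [x]: the mean
   of the roots of [f]. *)
Definition root_mean f : K := - f`_(size f).-2 / ((size f).-1)%:R.

Lemma root_mean_shift f c : f \is monic -> (1 < size f)%N ->
  ((size f).-1)%:R != 0 :> K -> root_mean (f \Po ('X + c%:P)) = root_mean f - c.
Proof.
move=> f_monic f_gt1 d_neq0; rewrite /root_mean size_comp_poly2 ?size_XaddC //.
have size_f : (size f).-1 = (size f).-2.+1 by lia.
rewrite size_f in d_neq0 *; rewrite coef_comp_XaddC; last by rewrite -size_f leqSpred.
rewrite -size_f -/(lead_coef f) (monicP f_monic) mul1r -mulr_natr opprD mulrDl mulNr.
by rewrite size_f mulNr mulfK.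
Qed.

Lemma root_mean_ker_H_add x f c : in_ker_H iota x ->
  is_minpoly iota f (x + iota c) -> root_mean f = c.
Proof.
move=> [g [gx g_deg g_mean]] fxc.
have := is_minpoly_shift (- c) gx; rewrite [iota (- c)]rmorphN opprK => g_shift.
rewrite (is_minpoly_uniq fxc g_shift) root_mean_shift ?(is_minpoly_monic gx) //.
- by rewrite [root_mean g]g_mean sub0r opprK.
- exact: is_minpoly_size_gt1 gx.
- by apply: deg_not_mult_char_neq0 g_deg _; have := is_minpoly_size_gt1 gx; lia.
Qed.

Definition regular_minpoly f :=
  (exists x, is_minpoly iota f x) /\ deg_not_mult_char K (size f).-1.

Lemma regular_minpolyP f x : regular_minpoly f -> root f^iota x -> is_minpoly iota f x.
Proof. by move=> [[y fy] _]; apply: is_minpoly_trans fy. Qed.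

Lemma regular_minpoly_deg f : regular_minpoly f -> ((size f).-1)%:R != 0 :> K.
Proof.
move=> [[x fx] f_deg]; apply: deg_not_mult_char_neq0 f_deg _.
by have := is_minpoly_size_gt1 fx; lia.
Qed.

Lemma regular_minpoly_separable f : regular_minpoly f -> separable_poly f.
Proof.
move=> f_reg; rewrite -(separable_map iota) unlock.
apply: Pdiv.ClosedField.root_coprimep => x fx; rewrite -/(root _ x) deriv_map.
have [f_monic _ f_min] := regular_minpolyP f_reg fx.
apply/negP => f'x; have f_gt1 := is_minpoly_size_gt1 (regular_minpolyP f_reg fx).
have f'_eq0 : f^`() = 0.
  apply/eqP/contraT => f'_neq0; have := f_min _ f'_neq0 f'x.
  by rewrite leqNgt lt_size_deriv ?monic_neq0.
have := coef_deriv f (size f).-2; rewrite f'_eq0 coef0.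
have -> : (size f).-2.+1 = (size f).-1 by lia.
rewrite -/(lead_coef f) (monicP f_monic) => /esym/eqP.
by rewrite (negPf (regular_minpoly_deg f_reg)).
Qed.

Lemma regular_minpoly_coprime f g : regular_minpoly f -> regular_minpoly g ->
  f != g -> coprimep f g.
Proof.
move=> f_reg g_reg f_neq_g; rewrite -(coprimep_map iota).
apply: Pdiv.ClosedField.root_coprimep => x fx; apply/negP => gx.
move/eqP: f_neq_g; apply.
exact: is_minpoly_uniq (regular_minpolyP f_reg fx) (regular_minpolyP g_reg gx).
Qed.

Lemma in_ker_H_sub_root_mean f x : regular_minpoly f -> root f^iota x ->
  in_ker_H iota (x - iota (root_mean f)).
Proof.
move=> f_reg fx; have fx_min := regular_minpolyP f_reg fx.
exists (f \Po ('X + (root_mean f)%:P)); split.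
- exact: is_minpoly_shift.
- by rewrite size_comp_poly2 ?size_XaddC //; case: f_reg.
- rewrite -/(root_mean _) root_mean_shift ?subrr ?(is_minpoly_monic fx_min) //.
    exact: is_minpoly_size_gt1 fx_min.
  exact: regular_minpoly_deg.
Qed.
End MinimalPolynomial.

Section MatrixPolynomial.
Variables (R : comNzRingType) (n : nat).
Implicit Types (A : 'M[R]_n.+1) (p q : {poly R}).

Lemma horner_mx_comp A p q : horner_mx A (p \Po q) = horner_mx (horner_mx A q) p.
Proof.
elim/poly_ind: p => [|p a IHp]; first by rewrite comp_poly0 !rmorph0.
by rewrite comp_poly_MXaddC !rmorphD !rmorphM /= IHp !horner_mx_C horner_mx_X.
Qed.

Lemma eigenrow_horner_mx A (v : 'rV_n.+1) a p :
  v *m A = a *: v -> v *m horner_mx A p = p.[a] *: v.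
Proof.
move=> vA; elim/poly_ind: p => [|p c IHp]; first by rewrite rmorph0 horner0 mulmx0 scale0r.
rewrite rmorphD rmorphM /= horner_mx_X horner_mx_C mulmxDr -mulmxE mulmxA IHp.
by rewrite -scalemxAl vA scalerA mul_mx_scalar hornerMXaddC scalerDl.
Qed.

Lemma commr_nilpotent_sub (A B : 'M[R]_n.+1) a b : comm_mx A B ->
  A ^+ a = 0 -> B ^+ b = 0 -> (A - B) ^+ (a + b) = 0.
Proof.
move=> AB Aa Bb; have AnB : GRing.comm A (- B) by apply: commrN.
rewrite exprDn_comm // big1 // => i _.
have [le_bi|lt_ib] := leqP b i.
  rewrite exprNn; have -> : B ^+ i = B ^+ (i - b) * B ^+ b by rewrite -exprD subnK.
  by rewrite Bb !mulr0 mul0rn.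
have le_a : (a <= a + b - i)%N by lia.
by rewrite -(subnK le_a) exprD Aa mulr0 mul0r mul0rn.
Qed.

End MatrixPolynomial.

Lemma poly_mx_horner (K : fieldType) n (A : 'M[K]_n.+1) p : poly_mx p A = horner_mx A p.
Proof.
rewrite -[in RHS](coefK p) poly_def linear_sum; apply: eq_bigr => i _.
by rewrite linearZ /= rmorphXn /= horner_mx_X.
Qed.

Section MatrixField.
Variable F : fieldType.

Lemma eigenvalue_root n (A : 'M[F]_n.+1) p a :
  horner_mx A p = 0 -> eigenvalue A a -> root p a.
Proof.
move=> Ap0 /eigenvalueP[v vA v_neq0]; have := eigenrow_horner_mx p vA.
by rewrite Ap0 mulmx0 => /esym/eqP; rewrite scaler_eq0 (negPf v_neq0) orbF.
Qed.

Lemma diagonalizable_prod_XsubC n (A : 'M[F]_n.+1) (rs : seq F) : uniq rs ->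
  horner_mx A (\prod_(r <- rs) ('X - r%:P)) = 0 -> diagonalizable A.
Proof. by move=> rs_uniq /mxminpoly_min A_min; apply/diagonalizableP; exists rs. Qed.

Lemma horner_mx_prod_XsubC_comp n (A : 'M[F]_n.+1) (zs : seq F) g : uniq zs ->
  horner_mx A (\prod_(z <- zs) ('X - z%:P)) = 0 ->
  horner_mx (horner_mx A g) (\prod_(y <- undup [seq g.[z] | z <- zs]) ('X - y%:P)) = 0.
Proof.
move=> zs_uniq A_zs; rewrite -horner_mx_comp.
have /dvdpP[q ->] : \prod_(z <- zs) ('X - z%:P) %|
    \prod_(y <- undup [seq g.[z] | z <- zs]) ('X - y%:P) \Po g.
  apply: uniq_roots_dvdp; last by rewrite uniq_rootsE.
  apply/allP => z z_zs; rewrite rootE horner_comp -rootE root_prod_XsubC mem_undup.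
  exact: map_f.
by rewrite rmorphM /= A_zs mulr0.
Qed.

Lemma diagonalizable_horner_mx n (A : 'M[F]_n.+1) (zs : seq F) g : uniq zs ->
  horner_mx A (\prod_(z <- zs) ('X - z%:P)) = 0 -> diagonalizable (horner_mx A g).
Proof.
move=> zs_uniq /(horner_mx_prod_XsubC_comp g zs_uniq).
exact: diagonalizable_prod_XsubC (undup_uniq _).
Qed.

Lemma eigenvalue_horner_mx n (A : 'M[F]_n.+1) (zs : seq F) g mu : uniq zs ->
  horner_mx A (\prod_(z <- zs) ('X - z%:P)) = 0 ->
  eigenvalue (horner_mx A g) mu -> exists2 z, z \in zs & mu = g.[z].
Proof.
move=> zs_uniq /(horner_mx_prod_XsubC_comp g zs_uniq) /eigenvalue_root mu_root /mu_root.
by rewrite root_prod_XsubC mem_undup => /mapP.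
Qed.

Lemma unitmx_rows_eq n m (P : 'M[F]_n) (X Y : 'M[F]_(n, m)) : P \in unitmx ->
  (forall i, row i P *m X = row i P *m Y) -> X = Y.
Proof.
move=> P_unit PXY; rewrite -(mulKmx P_unit X) -(mulKmx P_unit Y); congr (_ *m _).
by apply/row_matrixP => i; rewrite !row_mul PXY.
Qed.

Lemma similar_diag_eigenrows n (P A : 'M[F]_n) : P \in unitmx ->
  similar_diag P A -> forall i, exists a, row i P *m A = a *: row i P.
Proof.
move=> P_unit /similar_diagPex[d /(similarP P_unit) PA] i; exists (d 0 i).
by rewrite -row_mul PA row_mul row_diag_mx -scalemxAl -rowE.
Qed.

Lemma codiagonalizable2 n (A B : 'M[F]_n) :
  comm_mx A B -> diagonalizable A -> diagonalizable B ->
  exists2 P, P \in unitmx & similar_diag P A /\ similar_diag P B.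
Proof.
move=> AB A_diag B_diag.
have [|P P_unit /allP P_diag] := (codiagonalizableP [:: A; B]).1.
  split=> [X Y|X]; rewrite !inE; last by move=> /orP[]/eqP->.
  by move=> /orP[]/eqP-> /orP[]/eqP->; rewrite /comm_mx ?AB.
by exists P => //; split; apply: P_diag; rewrite !inE eqxx ?orbT.
Qed.

Lemma codiagonalizable_eigenrows n (A B : 'M[F]_n) :
  comm_mx A B -> diagonalizable A -> diagonalizable B ->
  exists2 P, P \in unitmx & forall i, exists a b,
    row i P *m A = a *: row i P /\ row i P *m B = b *: row i P.
Proof.
move=> AB A_diag B_diag; have [P P_unit [PA PB]] := codiagonalizable2 AB A_diag B_diag.
exists P => // i; have [a Aa] := similar_diag_eigenrows P_unit PA i.
by have [b Bb] := similar_diag_eigenrows P_unit PB i; exists a, b.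
Qed.

Lemma diagonalizable_add n (A B : 'M[F]_n) :
  comm_mx A B -> diagonalizable A -> diagonalizable B -> diagonalizable (A + B).
Proof.
move=> AB A_diag B_diag.
have [P P_unit [/is_diag_mxP PA /is_diag_mxP PB]] := codiagonalizable2 AB A_diag B_diag.
exists P => //; apply/is_diag_mxP => i j ij.
by rewrite /conjmx mulmxDr mulmxDl mxE PA ?PB ?addr0.
Qed.

Lemma diagonalizable_nilpotent_sub_eq n (A B : 'M[F]_n.+1) k :
  comm_mx A B -> diagonalizable A -> diagonalizable B -> (A - B) ^+ k = 0 -> A = B.
Proof.
move=> AB A_diag B_diag AB_nil.
have [P P_unit P_eigen] := codiagonalizable_eigenrows AB A_diag B_diag.
apply: (unitmx_rows_eq P_unit) => i; have [a [b [Aa Bb]]] := P_eigen i.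
have ABab : row i P *m (A - B) = (a - b) *: row i P by rewrite mulmxBr Aa Bb scalerBl.
have := eigenrow_horner_mx 'X^k ABab; rewrite rmorphXn /= horner_mx_X AB_nil mulmx0 hornerXn.
move=> /esym/eqP; rewrite scaler_eq0 expf_eq0 subr_eq0 => /orP[/andP[_ /eqP ab]|/eqP P0].
  by rewrite Aa Bb ab.
by rewrite Aa Bb P0 !scaler0.
Qed.
End MatrixField.

Lemma prod_XsubC_dvdp_exp (R : idomainType) (zs : seq R) q : all (root q) zs ->
  \prod_(z <- zs) ('X - z%:P) %| q ^+ size zs.
Proof.
elim: zs => [|z zs IHzs] /=; first by rewrite big_nil dvd1p.
by move=> /andP[qz /IHzs]; rewrite big_cons exprS; apply: dvdp_mul; rewrite dvdp_XsubCl.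
Qed.

Section MapMatrix.
Variables (K : fieldType) (L : closedFieldType) (iota : {rmorphism K -> L}) (n : nat).

Lemma map_mx_prod_XsubC_root (A : 'M[K]_n.+1) : diagonalizable A ->
  exists2 rs : seq K, uniq rs &
    horner_mx (map_mx iota A) (\prod_(r <- map iota rs) ('X - r%:P)) = 0.
Proof.
move=> /diagonalizableP[rs rs_uniq /mxminpoly_minP A_rs]; exists rs => //.
rewrite big_map -(eq_bigr _ (fun r _ => map_polyXsubC iota r)) -rmorph_prod.
by rewrite -map_horner_mx A_rs map_mx0.
Qed.

Lemma map_diagonalizable (A : 'M[K]_n.+1) : diagonalizable A -> diagonalizable (map_mx iota A).
Proof.
move=> /map_mx_prod_XsubC_root[rs rs_uniq A_rs]; apply: diagonalizable_prod_XsubC A_rs.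
by rewrite map_inj_uniq //; apply: fmorph_inj.
Qed.

Lemma eigenvalue_map_diagonalizable (A : 'M[K]_n.+1) a : diagonalizable A ->
  eigenvalue (map_mx iota A) a -> exists x, a = iota x.
Proof.
move=> /map_mx_prod_XsubC_root[rs _ A_rs] /(eigenvalue_root A_rs).
by rewrite root_prod_XsubC => /mapP[x _ ->]; exists x.
Qed.

End MapMatrix.

Section RegularMinpolys.
Variables (K : fieldType) (L : closedFieldType) (iota : {rmorphism K -> L}).
Variable fs : seq {poly K}.
Hypotheses (fs_uniq : uniq fs) (fs_regular : {in fs, forall f, regular_minpoly iota f}).
Local Notation "p ^iota" := (map_poly iota p) (at level 2, format "p ^iota").
Local Notation P := (\prod_(f <- fs) f).

Lemma regular_minpolys_coprime : pairwise (@coprimep K) fs.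
Proof.
move: fs_uniq; rewrite uniq_pairwise; apply: sub_in_pairwise (allss fs) => f g f_fs g_fs.
exact: regular_minpoly_coprime (fs_regular f_fs) (fs_regular g_fs).
Qed.

Lemma root_map_prod z : root P^iota z -> exists2 f, f \in fs & root f^iota z.
Proof. by rewrite rmorph_prod rootE horner_prod prodf_seq_eq0 => /hasP[f f_fs /= fz]; exists f. Qed.

Lemma separable_prod_regular_minpolys : separable_poly P.
Proof.
apply: separable_prod_coprime regular_minpolys_coprime _.
by move=> f /fs_regular /regular_minpoly_separable.
Qed.

Lemma map_prod_regular_minpolys_split :
  exists2 ps, uniq ps & P^iota = \prod_(z <- ps) ('X - z%:P).
Proof.
have [ps P_eq] := closed_field_poly_normal P^iota.
have P_monic : P \is monic by rewrite big_seq monic_prod // => f /fs_regular[[x /is_minpoly_monic]].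
rewrite lead_coef_map (monicP P_monic) rmorph1 scale1r in P_eq.
exists ps => //; rewrite -separable_prod_XsubC -P_eq separable_map.
exact: separable_prod_regular_minpolys.
Qed.

End RegularMinpolys.

Definition jordan_chevalley_spec (K : fieldType) (L : closedFieldType)
    (iota : {rmorphism K -> L}) n (M H V N : 'M[K]_n) : Prop :=
  [/\ complete_JC iota M H V N,
      (forall H' V' N', complete_JC iota M H' V' N' -> [/\ H' = H, V' = V & N' = N]),
      [/\ is_poly_in M H, is_poly_in M V & is_poly_in M N],
      additive_JC iota M (H + V) N &
      (forall S N', additive_JC iota M S N' -> S = H + V /\ N' = N)].

Section JordanChevalley.
Variables (K : fieldType) (L : closedFieldType) (iota : {rmorphism K -> L}).
Variables (n : nat) (M : 'M[K]_n.+1) (fs : seq {poly K}).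
Hypotheses (fs_uniq : uniq fs) (fs_regular : {in fs, forall f, regular_minpoly iota f}).
Local Notation "p ^iota" := (map_poly iota p) (at level 2, format "p ^iota").
Local Notation P := (\prod_(f <- fs) f).
Variables (s h : {poly K}) (k : nat).
Hypotheses (s_X : P %| s - 'X) (P_s : horner_mx M (P \Po s) = 0).
Hypotheses (P_k : horner_mx M (P ^+ k) = 0).
Hypothesis h_root_mean : forall f, f \in fs -> f %| h - (root_mean f)%:P.

Local Notation S := (horner_mx M s).
Local Notation H := (horner_mx M (h \Po s)).
Local Notation V := (horner_mx M (('X - h) \Po s)).
Local Notation N := (horner_mx M ('X - s)).

Lemma horner_h_root f z : f \in fs -> root f^iota z -> h^iota.[z] = iota (root_mean f).
Proof.
move=> f_fs fz; have /dvdpP[q hq] := h_root_mean f_fs.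
have : (h - (root_mean f)%:P)^iota.[z] = (q * f)^iota.[z] by rewrite hq.
rewrite [in RHS]rmorphM hornerM (eqP fz) mulr0 rmorphB /= map_polyC !hornerE.
by move=> /eqP; rewrite subr_eq0 => /eqP.
Qed.

Lemma horner_S_P : horner_mx S P = 0.
Proof. by rewrite -horner_mx_comp. Qed.

Lemma map_S_split : exists2 ps, uniq ps &
  horner_mx (map_mx iota S) (\prod_(z <- ps) ('X - z%:P)) = 0 /\
  forall z, z \in ps -> root P^iota z.
Proof.
have [ps ps_uniq P_eq] := map_prod_regular_minpolys_split fs_uniq fs_regular.
exists ps => //; split; first by rewrite -P_eq -map_horner_mx horner_S_P map_mx0.
by move=> z z_ps; rewrite P_eq root_prod_XsubC.
Qed.

Lemma S_semisimple : semisimple_mx iota S.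
Proof. by have [ps ps_uniq [S_ps _]] := map_S_split; apply: diagonalizable_prod_XsubC S_ps. Qed.

Lemma N_nilpotent : N ^+ k = 0.
Proof.
rewrite -rmorphXn; have /dvdpP[q ->] : P ^+ k %| ('X - s) ^+ k.
  by rewrite dvdp_exp2r // -opprB dvdpNr.
by rewrite rmorphM /= P_k mulr0.
Qed.

Lemma H_add_V : H + V = S.
Proof. by rewrite -rmorphD /= -comp_polyD addrC subrK comp_polyX. Qed.

Lemma S_add_N : S + N = M.
Proof. by rewrite -rmorphD /= addrC subrK horner_mx_X. Qed.

(* [Q (h(S))] vanishes because [h = root_mean f] modulo each factor [f] of [P]. *)
Lemma H_diagonalizable : diagonalizable H.
Proof.
set Q := \prod_(c <- undup [seq root_mean f | f <- fs]) ('X - c%:P).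
have P_Qh : P %| Q \Po h.
  apply: (dvdp_prod_coprime (regular_minpolys_coprime fs_uniq fs_regular)) => f f_fs.
  apply: dvdp_trans (h_root_mean f_fs) _.
  have Q_mean : Q.[root_mean f] = 0.
    by apply/eqP; rewrite -rootE root_prod_XsubC mem_undup map_f.
  by have := dvdp_comp_sub Q h (root_mean f)%:P; rewrite comp_polyCr Q_mean subr0.
apply: (diagonalizable_prod_XsubC (undup_uniq [seq root_mean f | f <- fs])).
rewrite -/Q horner_mx_comp -[horner_mx (horner_mx S h) Q]horner_mx_comp.
by have /dvdpP[q ->] := P_Qh; rewrite rmorphM /= horner_S_P mulr0.
Qed.

Lemma V_eigenvalue mu : eigenvalue (map_mx iota V) mu ->
  exists2 f, f \in fs & exists2 z, root f^iota z & mu = z - iota (root_mean f).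
Proof.
have [ps ps_uniq [S_ps ps_P]] := map_S_split.
rewrite horner_mx_comp map_horner_mx => /(eigenvalue_horner_mx ps_uniq S_ps)[z /ps_P].
move=> /root_map_prod[f f_fs fz] ->; exists f => //; exists z => //.
by rewrite rmorphB /= map_polyX !hornerE (horner_h_root f_fs fz).
Qed.

Lemma V_semisimple : semisimple_mx iota V.
Proof.
have [ps ps_uniq [S_ps _]] := map_S_split.
by rewrite /semisimple_mx horner_mx_comp map_horner_mx; apply: diagonalizable_horner_mx S_ps.
Qed.

Lemma V_vertical : K_vertical_mx iota V.
Proof.
suff V_ker mu : eigenvalue (map_mx iota V) mu -> in_ker_H iota mu.
  by split=> // mu /V_ker[p [p_mu p_deg _]]; exists p.
move=> /V_eigenvalue[f f_fs [z fz ->]].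
exact: in_ker_H_sub_root_mean (fs_regular f_fs) fz.
Qed.

Lemma additive_JC_unique S' N' : additive_JC iota M S' N' -> S' = S /\ N' = N.
Proof.
move=> [M_eq S'_ss [b N'_nil] S'N'].
have S'M : comm_mx S' M by rewrite /comm_mx M_eq mulmxDr mulmxDl S'N'.
have N'M : comm_mx N' M by rewrite /comm_mx M_eq mulmxDr mulmxDl S'N'.
have NN' : comm_mx N N' by apply/comm_horner_mx/comm_mx_sym.
have S'_sub_S : S' - S = N - N'.
  have SN_eq : S' + N' = S + N by rewrite -M_eq S_add_N.
  by rewrite -[S'](addrK N') SN_eq addrAC [S + N]addrC addrK.
have S_eq : S' = S.
  apply: (map_mx_inj (f := iota)); apply: (diagonalizable_nilpotent_sub_eq (k := k + b)) => //.
  - by rewrite /comm_mx -!map_mxM (comm_mx_horner s S'M).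
  - exact: S_semisimple.
  - by rewrite -map_mxB -rmorphXn S'_sub_S /= (commr_nilpotent_sub NN' N_nilpotent N'_nil) map_mx0.
by split=> //; apply: (@addrI _ S); rewrite S_add_N -S_eq.
Qed.

(* On a common eigenvector of [H'] and [V'] with eigenvalues [a] and [b], [S]
   acts by [a + b], whose minimal polynomial [f] has root mean [a] because [a]
   lies in [K] and [b] in [Ker(H_K)]; so [H = h(S)] acts by [a] as well. *)
Lemma complete_JC_unique H' V' N' : complete_JC iota M H' V' N' ->
  [/\ H' = H, V' = V & N' = N].
Proof.
move=> [M_eq [H'V' H'N' V'N'] H'_diag [[_ V'_ker] V'_ss] N'_nil].
have H'V'_map : comm_mx (map_mx iota H') (map_mx iota V') by rewrite /comm_mx -!map_mxM H'V'.
have H'_ss := map_diagonalizable iota H'_diag.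
have [S_eq ->] : H' + V' = S /\ N' = N.
  apply: additive_JC_unique; split => //.
  - by rewrite /semisimple_mx map_mxD; apply: diagonalizable_add.
  - by rewrite /comm_mx mulmxDl mulmxDr H'N' V'N'.
suff H'_eq : H' = H by split => //; apply: (@addrI _ H); rewrite H_add_V -S_eq H'_eq.
apply: (map_mx_inj (f := iota)).
have [Q Q_unit Q_eigen] := codiagonalizable_eigenrows H'V'_map H'_ss V'_ss.
apply: (unitmx_rows_eq Q_unit) => i; have [a [b [H'a V'b]]] := Q_eigen i.
set e := row i Q in H'a V'b *; have [->|e_neq0] := eqVneq e 0; first by rewrite !mul0mx.
have Se : e *m map_mx iota S = (a + b) *: e by rewrite -S_eq map_mxD mulmxDr H'a V'b scalerDl.
have [f f_fs fab] : exists2 f, f \in fs & root f^iota (a + b).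
  apply: root_map_prod; apply: (@eigenvalue_root _ _ (map_mx iota S)).
    by rewrite -map_horner_mx horner_S_P map_mx0.
  by apply/eigenvalueP; exists e.
have [x a_eq] : exists x, a = iota x.
  by apply: eigenvalue_map_diagonalizable H'_diag _; apply/eigenvalueP; exists e.
have f_mean : root_mean f = x.
  apply: (root_mean_ker_H_add (V'_ker b _)); first by apply/eigenvalueP; exists e.
  by rewrite addrC -a_eq; apply: regular_minpolyP (fs_regular f_fs) fab.
rewrite H'a horner_mx_comp map_horner_mx (eigenrow_horner_mx _ Se).
by rewrite (horner_h_root f_fs fab) f_mean a_eq.
Qed.

Lemma horner_mx_jordan_chevalley_spec : jordan_chevalley_spec iota M H V N.
Proof.
have N_nil : nilpotent_mx N by exists k; apply: N_nilpotent.
split.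
- split; first by rewrite H_add_V S_add_N.
  + by split; apply: comm_horner_mx2.
  + exact: H_diagonalizable.
  + by split; [apply: V_vertical | apply: V_semisimple].
  + exact: N_nil.
- exact: complete_JC_unique.
- by split; [exists (h \Po s) | exists (('X - h) \Po s) | exists ('X - s)]; rewrite poly_mx_horner.
- by rewrite H_add_V; split; [rewrite S_add_N | apply: S_semisimple | | apply: comm_horner_mx2].
- by move=> S' N' /additive_JC_unique; rewrite H_add_V.
Qed.

End JordanChevalley.

Lemma seq_choice (T U : eqType) (R : T -> U -> Prop) (xs : seq T) :
  (forall x, x \in xs -> exists y, R x y) ->
  exists ys : seq U, (forall y, y \in ys -> exists2 x, x \in xs & R x y) /\
                     (forall x, x \in xs -> exists2 y, y \in ys & R x y).
Proof.
elim: xs => [|x xs IHxs] R_xs; first by exists [::].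
have [y Rxy] := R_xs x (mem_head _ _).
have [|ys [ys_xs xs_ys]] := IHxs; first by move=> x' x'_xs; apply: R_xs; rewrite inE x'_xs orbT.
exists (y :: ys); split=> [y'|x']; rewrite inE => /predU1P[->|].
- by exists x; rewrite ?mem_head.
- by move=> /ys_xs[x' x'_xs Rx'y']; exists x'; rewrite // inE x'_xs orbT.
- by exists y; rewrite ?mem_head.
- by move=> /xs_ys[y' y'_ys Rx'y']; exists y'; rewrite // inE y'_ys orbT.
Qed.

Section Existence.
Variables (K : fieldType) (L : closedFieldType) (iota : {rmorphism K -> L}).
Local Notation "p ^iota" := (map_poly iota p) (at level 2, format "p ^iota").

Lemma regular_minpolys_of_K_regular n (M : 'M[K]_n.+1) : K_regular_mx iota M ->
  exists fs, [/\ uniq fs, {in fs, forall f, regular_minpoly iota f} &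
                 exists k, char_poly M %| (\prod_(f <- fs) f) ^+ k].
Proof.
move=> M_reg; have [zs zs_eq] := closed_field_poly_normal (char_poly (map_mx iota M)).
rewrite (monicP (char_poly_monic _)) scale1r in zs_eq.
have zs_eigen z : z \in zs -> eigenvalue (map_mx iota M) z.
  by rewrite eigenvalue_root_char zs_eq root_prod_XsubC.
pose R z f := is_minpoly iota f z /\ deg_not_mult_char K (size f).-1.
have [|fs [fs_zs zs_fs]] := @seq_choice _ _ R zs.
  by move=> z /zs_eigen /M_reg[f fz f_deg]; exists f.
exists (undup fs); split=> [||]; first exact: undup_uniq.
  by move=> f; rewrite mem_undup => /fs_zs[z _ [fz f_deg]]; split; first by exists z.
exists (size zs); rewrite -(dvdp_map iota) map_char_poly zs_eq rmorphXn /=.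
apply/prod_XsubC_dvdp_exp/allP => z /zs_fs[f f_fs [fz _]].
by rewrite rmorph_prod (big_rem f) ?mem_undup //= rootM (is_minpoly_root fz).
Qed.

Lemma jordan_chevalley_exists n (M : 'M[K]_n.+1) : K_regular_mx iota M ->
  exists H V N, jordan_chevalley_spec iota M H V N.
Proof.
move=> /regular_minpolys_of_K_regular[fs [fs_uniq fs_regular [k char_Pk]]].
set P := \prod_(f <- fs) f in char_Pk.
have horner_M_eq0 q : P ^+ k %| q -> horner_mx M q = 0.
  by move=> Pk_q; apply/mxminpoly_minP/(dvdp_trans (mxminpoly_dvd_char M))/(dvdp_trans char_Pk).
have [s [s_X Ps]] := hensel_lift k (separable_prod_regular_minpolys fs_uniq fs_regular).
have fs_coprime := regular_minpolys_coprime fs_uniq fs_regular.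
have [h h_mean] := poly_chinese fs_coprime (fun f => (root_mean f)%:P).
have P_s : horner_mx M (P \Po s) = 0 by apply/horner_M_eq0/(dvdp_trans _ Ps)/dvdp_exp2l.
have P_k : horner_mx M (P ^+ k) = 0 by apply/horner_M_eq0/dvdpp.
by do 3!eexists; exact: (horner_mx_jordan_chevalley_spec fs_uniq fs_regular s_X P_s P_k h_mean).
Qed.

Lemma jordan_chevalley_spec0 (M : 'M[K]_0) : jordan_chevalley_spec iota M 0 0 0.
Proof.
have all0 (A : 'M[K]_0) : A = 0 by apply: thinmx0.
have no_eigen (A : 'M[L]_0) a : ~ eigenvalue A a.
  by rewrite /eigenvalue (thinmx0 (eigenspace A a)) eqxx.
have diag0 (A : 'M[L]_0) : diagonalizable A by rewrite (thinmx0 A); apply: diagonalizable0.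
have nil0 : nilpotent_mx (0 : 'M[K]_0) by exists 0%N; apply: all0.
split.
- split; first by rewrite (all0 M) !addr0.
  + by split; rewrite /comm_mx !(all0 (_ *m _)).
  + exact: diagonalizable0.
  + by split; [split=> a /no_eigen | apply: diag0].
  + exact: nil0.
- by move=> H' V' N' _; rewrite (all0 H') (all0 V') (all0 N').
- by split; exists 0; rewrite (all0 (poly_mx _ _)).
- by split; rewrite ?(all0 M) ?addr0 // /comm_mx !(all0 (_ *m _)).
- by move=> S N' _; rewrite (all0 S) (all0 N') addr0.
Qed.

End Existence.

Unset Implicit Arguments.

Theorem theorem2p6 (K : fieldType) (L : closedFieldType)
    (iota : {rmorphism K -> L}) (n : nat) (M : 'M[K]_n) :
  algebraic_over iota ->
  K_regular_mx iota M ->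
  exists H V N : 'M[K]_n,
    [/\ complete_JC iota M H V N,
        (forall H' V' N' : 'M[K]_n, complete_JC iota M H' V' N' ->
           [/\ H' = H, V' = V & N' = N]),
        [/\ is_poly_in M H, is_poly_in M V & is_poly_in M N],
        additive_JC iota M (H + V) N &
        (forall S N' : 'M[K]_n, additive_JC iota M S N' ->
           S = H + V /\ N' = N)].
Proof.
move=> _; case: n M => [|n] M M_reg; last exact: jordan_chevalley_exists.
by exists 0, 0, 0; apply: jordan_chevalley_spec0.
Qed.
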